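(* Let $m\ge2$, $n\ge1$ and $\mathcal{A}=(a_{i_1i_2\cdots i_m})\in\mathbb{R}_+^{[m,n]}$ with $r_i(\mathcal{A})\neq0$ for all $i\in[n]$. Then \[\min_{i\in[n]}\frac{r_i(\mathcal{A}^2)}{(r_i(\mathcal{A}))^{m-1}}\le\rho(\mathcal{A})\le\max_{i\in[n]}\frac{r_i(\mathcal{A}^2)}{(r_i(\mathcal{A}))^{m-1}}.\]
   Context: $[n]=\{1,\ldots,n\}$. $\mathbb{R}_+^{[m,n]}$ denotes the set of order $m$, dimension $n$ tensors $\mathcal{A}=(a_{i_1\cdots i_m})$, $i_j\in[n]$, with nonnegative real entries. For a tensor $\mathcal{T}=(t_{i_1\cdots i_p})$ of order $p$ and dimension $n$, $r_i(\mathcal{T})=\sum_{i_2,\ldots,i_p=1}^n|t_{ii_2\cdots i_p}|$. $\mathcal{A}^2=\mathcal{A}\mathcal{A}$ is the general product: for $\mathcal{A}$ of order $m$ and $\mathcal{B}$ of order $k$, $\mathcal{A}\mathcal{B}=(c_{i\alpha_1\cdots\alpha_{m-1}})$ is the order $(m-1)(k-1)+1$, dimension $n$ tensor with $c_{i\alpha_1\cdots\alpha_{m-1}}=\sum_{i_2,\ldots,i_m=1}^n a_{ii_2\cdots i_m}b_{i_2\alpha_1}\cdots b_{i_m\alpha_{m-1}}$, $i\in[n]$, $\alpha_j\in[n]^{k-1}$ (where $b_{j\alpha}$ with $\alpha=(j_2,\ldots,j_k)$ means $b_{jj_2\cdots j_k}$). Eigenvalues: $\lambda\in\mathbb{C}$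 is an eigenvalue of $\mathcal{A}$ if there is a nonzero $x\in\mathbb{C}^n$ with $\sum_{i_2,\ldots,i_m=1}^n a_{ii_2\cdots i_m}x_{i_2}\cdots x_{i_m}=\lambda x_i^{m-1}$ for all $i\in[n]$; $\rho(\mathcal{A})$ is the maximum modulus of the eigenvalues of $\mathcal{A}$. *)

From HB Require Import structures.
From mathcomp Require Import all_boot all_order all_algebra.
From mathcomp Require Import zify.
From mathcomp Require Import classical_sets reals.
From mathcomp Require Import complex.
Set Implicit Arguments. Unset Strict Implicit. Unset Printing Implicit Defensive.
Import Order.TTheory GRing.Theory Num.Theory.
Local Open Scope ring_scope.

(* An order m, dimension n tensor T = (t_{i_1 ... i_m}) (m >= 1), stored as
   T i (i_2,...,i_m), i.e. the first index is separated from the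
   (m-1)-tuple of the remaining indices. *)
Definition tensor (R : Type) (m n : nat) := 'I_n -> (m.-1).-tuple 'I_n -> R.

Definition rsum (R : numDomainType) (p n : nat) (T : tensor R p n) (i : 'I_n) : R :=
  \sum_(t : (p.-1).-tuple 'I_n) `|T i t|.

Lemma blk_idx_proof (a b : nat) (j : 'I_a) (l : 'I_b) : (j * b + l < a * b)%N.
Proof.
have hj := ltn_ord j; have hl := ltn_ord l.
have : (j.+1 * b <= a * b)%N by rewrite leq_mul2r hj orbT.
rewrite mulSn; lia.
Qed.
Definition blk_idx (a b : nat) (j : 'I_a) (l : 'I_b) : 'I_(a * b) :=
  Ordinal (blk_idx_proof j l).

(* alpha = (alpha_1, ..., alpha_a), each alpha_j in [n]^b; block j returns alpha_(j+1) *)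
Definition block (n a b : nat) (alpha : (a * b).-tuple 'I_n) (j : 'I_a) : b.-tuple 'I_n :=
  [tuple tnth alpha (blk_idx j l) | l < b].

(* General product: A of order m, B of order k; AB has order (m-1)(k-1)+1 and
   c_{i alpha_1 ... alpha_{m-1}} =
     sum_{i_2..i_m} a_{i i_2 .. i_m} b_{i_2 alpha_1} ... b_{i_m alpha_{m-1}}. *)
Definition tprod (R : pzSemiRingType) (m k n : nat) (A : tensor R m n) (B : tensor R k n)
  : tensor R ((m.-1) * (k.-1)).+1 n :=
  fun i alpha =>
    \sum_(s : (m.-1).-tuple 'I_n)
       A i s * \prod_(j < m.-1) B (tnth s j) (block alpha j).

Definition tsquare (R : pzSemiRingType) (m n : nat) (A : tensor R m n) :=
  tprod A A.

Definition cmod (R : rcfType) (z : R[i]) : R :=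
  Num.sqrt (complex.Re z ^+ 2 + complex.Im z ^+ 2).

Definition teigenvalue (R : rcfType) (m n : nat) (A : tensor R m n) (lambda : R[i]) : Prop :=
  exists x : 'I_n -> R[i],
    (exists j, x j != 0) /\
    forall i : 'I_n,
      \sum_(s : (m.-1).-tuple 'I_n) (A i s)%:C%C * \prod_(j < m.-1) x (tnth s j)
      = lambda * x i ^+ (m.-1).

(* spectral radius: the largest modulus of the eigenvalues (the set of moduli
   is finite and nonempty, so its supremum is its maximum) *)
Definition spectral_radius (R : realType) (m n : nat) (A : tensor R m n) : R :=
  sup [set cmod lambda | lambda in [set l | teigenvalue A l]].

(* minimum and maximum of f over [n], n >= 1 (the seed f 0 is itself a value) *)
Definition fmin (R : realDomainType) (n : nat) (hn : (0 < n)%N) (f : 'I_n -> R) : R :=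
  \big[Order.min/f (Ordinal hn)]_(i < n) f i.
Definition fmax (R : realDomainType) (n : nat) (hn : (0 < n)%N) (f : 'I_n -> R) : R :=
  \big[Order.max/f (Ordinal hn)]_(i < n) f i.

(* Write p = m - 1, r = (r_i(A))_i, (A y^p)_i = sum_s a_{i s} y_{s_1} ... y_{s_p}
   and y^[p] for the entrywise power.  For nonnegative A the general product gives
   r_i(A^2) = (A r^p)_i, so both bounds compare eigenvalues with (A r^p)_i / r_i^p.

   Upper bound: if A x^p = lambda x^[p], the triangle inequality gives
   |lambda| |x|^[p] <= A |x|^p.  At an index i maximising t = |x_i| / r_i we have
   |x| <= t r, hence |lambda| t^p r_i^p <= (A |x|^p)_i <= t^p (A r^p)_i.

   Lower bound: with c the least ratio, c r^[p] <= A r^p, and a Collatz-Wielandt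
   argument on the simplex produces a nonnegative eigenpair (y, lambda) with
   c <= lambda.  For a positive tensor B, the supremum mu of the nu admitting a
   y in the simplex with nu y^[p] <= B y^p is attained by compactness, and equality
   must hold in every coordinate: raising a coordinate where it is strict would
   make all inequalities strict and allow a larger nu.  A nonnegative A is the
   limit of the positive tensors A + e, and a limit of their normalised
   eigenvectors is an eigenvector of A with eigenvalue at least c. *)

From HB Require Import structures.
From mathcomp Require Import all_boot all_order all_algebra.
From mathcomp Require Import classical_sets reals complex.
From mathcomp Require Import ring lra.
From mathcomp Require Import boolp topology normedtype realfun.
Import Order.TTheory GRing.Theory Num.Theory.
Import numFieldNormedType.Exports.
Local Open Scope ring_scope.

Set Implicit Arguments. Unset Strict Implicit. Unset Printing Implicit Defensive.

Definition tapply (R : pzSemiRingType) (n p : nat) (B : 'I_n -> p.-tuple 'I_n -> R)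
    (y : 'I_n -> R) (i : 'I_n) : R :=
  \sum_(s : p.-tuple 'I_n) B i s * \prod_(j < p) y (tnth s j).

Definition subeigen (R : numDomainType) n p (B : 'I_n -> p.-tuple 'I_n -> R)
    (nu : R) (y : 'I_n -> R) :=
  forall i, nu * y i ^+ p <= tapply B y i.

Definition simplex (R : numDomainType) n (y : 'I_n -> R) :=
  (forall i, 0 <= y i) /\ \sum_i y i = 1.

Lemma sum_tuple_prod (R : comPzSemiRingType) (T : finType) p (F : 'I_p -> T -> R) :
  \sum_(s : p.-tuple T) \prod_(j < p) F j (tnth s j) = \prod_(j < p) \sum_(t : T) F j t.
Proof.
rewrite bigA_distr_bigA (reindex (fun s : p.-tuple T => [ffun j => tnth s j])) /=.
  by apply: eq_bigr => s _; apply: eq_bigr => j _; rewrite ffunE.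
apply: onW_bij; exists (fun f : {ffun 'I_p -> T} => [tuple f j | j < p]).
  by move=> s; apply: eq_from_tnth => j; rewrite tnth_mktuple ffunE.
by move=> f; apply/ffunP => j; rewrite ffunE tnth_mktuple.
Qed.

Lemma block_inj n a b : injective (fun s : (a * b).-tuple 'I_n => [tuple block s j | j < a]).
Proof.
move=> s s' ss'; apply: eq_from_tnth => k.
have b_gt0 : (0 < b)%N.
  by move: (leq_ltn_trans (leq0n k) (ltn_ord k)); rewrite muln_gt0 => /andP[].
have kj : (k %/ b < a)%N by rewrite ltn_divLR.
have kl : (k %% b < b)%N by rewrite ltn_pmod.
have -> : k = blk_idx (Ordinal kj) (Ordinal kl) by apply: val_inj; rewrite /= -divn_eq.
have := congr1 (fun S => tnth (tnth S (Ordinal kj)) (Ordinal kl)) ss'.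
by rewrite /= !tnth_mktuple.
Qed.

Lemma sum_blocks_prod (R : comPzSemiRingType) n a b (F : 'I_a -> b.-tuple 'I_n -> R) :
  \sum_(s : (a * b).-tuple 'I_n) \prod_(j < a) F j (block s j)
  = \prod_(j < a) \sum_(t : b.-tuple 'I_n) F j t.
Proof.
rewrite -sum_tuple_prod (reindex _ (onW_bij _ (inj_card_bij (@block_inj n a b) _))) /=.
  by apply: eq_bigr => s _; apply: eq_bigr => j _; rewrite tnth_mktuple.
by rewrite !card_tuple !card_ord mulnC expnM.
Qed.

Lemma rsum_tsquare (R : numDomainType) m n (A : tensor R m n) :
  (forall i t, 0 <= A i t) -> forall i, rsum (tsquare A) i = tapply A (rsum A) i.
Proof.
move=> A_ge0 i; rewrite /rsum /tsquare /tprod /tapply.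
have A2_ge0 s : 0 <= \sum_t A i t * \prod_(j < m.-1) A (tnth t j) (block s j).
  by rewrite sumr_ge0 // => t _; rewrite mulr_ge0 ?prodr_ge0.
under eq_bigr => s _ do rewrite ger0_norm //.
rewrite exchange_big /=; apply: eq_bigr => s _.
rewrite -mulr_sumr (sum_blocks_prod (fun j => A (tnth s j))).
by congr (_ * _); apply: eq_bigr => j _; apply: eq_bigr => t _; rewrite ger0_norm.
Qed.

Section TensorApply.
Variables (R : numDomainType) (n p : nat).
Implicit Types (B : 'I_n -> p.-tuple 'I_n -> R) (y z : 'I_n -> R).

Lemma tapply_ge0 B y i :
  (forall i s, 0 <= B i s) -> (forall j, 0 <= y j) -> 0 <= tapply B y i.
Proof. by move=> B_ge0 y_ge0; rewrite sumr_ge0 // => s _; rewrite mulr_ge0 ?prodr_ge0. Qed.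

Lemma le_tapply B y z i : (forall i s, 0 <= B i s) -> (forall j, 0 <= y j <= z j) ->
  tapply B y i <= tapply B z i.
Proof. by move=> B_ge0 yz; rewrite ler_sum // => s _; rewrite ler_wpM2l // ler_prod. Qed.

Lemma tapplyZ B (a : R) y i : tapply B (fun j => a * y j) i = a ^+ p * tapply B y i.
Proof.
rewrite /tapply mulr_sumr; apply: eq_bigr => s _.
by rewrite big_split /= prodr_const card_ord mulrCA.
Qed.

Lemma tapplyDc B (e : R) y i :
  tapply (fun i s => B i s + e) y i = tapply B y i + e * (\sum_j y j) ^+ p.
Proof.
have -> : (\sum_j y j) ^+ p = \sum_(s : p.-tuple 'I_n) \prod_(j < p) y (tnth s j).
  by rewrite (sum_tuple_prod (fun _ => y)) prodr_const card_ord.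
by rewrite /tapply mulr_sumr -big_split; apply: eq_bigr => s _; rewrite mulrDl.
Qed.

End TensorApply.

Lemma subeigen_le_ratio (R : realFieldType) n p (B : 'I_n -> p.-tuple 'I_n -> R)
    (nu : R) (w r : 'I_n -> R) :
  (forall i s, 0 <= B i s) -> (forall j, 0 < r j) -> (forall j, 0 <= w j) ->
  (exists j, 0 < w j) -> subeigen B nu w -> exists i, nu <= tapply B r i / r i ^+ p.
Proof.
move=> B_ge0 r_gt0 w_ge0 [j0 wj0_gt0] w_sub.
have [i _ i_max] := @arg_maxP _ R _ j0 xpredT (fun j => w j / r j) isT.
set t := w i / r i in i_max.
have t_gt0 : 0 < t := lt_le_trans (divr_gt0 wj0_gt0 (r_gt0 j0)) (i_max j0 isT).
have w_le j : 0 <= w j <= t * r j by rewrite w_ge0 -ler_pdivrMr //; exact: i_max.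
have wi : w i = t * r i by rewrite divfK // gt_eqF.
exists i; rewrite ler_pdivlMr ?exprn_gt0 // -(ler_pM2l (exprn_gt0 p t_gt0)).
rewrite mulrCA -exprMn -wi -tapplyZ; exact: le_trans (w_sub i) (le_tapply _ _ w_le).
Qed.

Section ComplexModulus.
Variable R : rcfType.

Lemma normCE (z : R[i]) : `|z| = (cmod z)%:C%C.
Proof. by rewrite normc_def. Qed.

Lemma cmodR (a : R) : cmod a%:C%C = `|a|.
Proof. by rewrite /cmod /= expr0n /= addr0 sqrtr_sqr. Qed.

Lemma cmod_ge0 (z : R[i]) : 0 <= cmod z.
Proof. exact: sqrtr_ge0. Qed.

Lemma cmod_eq0 (z : R[i]) : (cmod z == 0) = (z == 0).
Proof.
by rewrite -[z == 0]normr_eq0 normCE -(rmorph0 (real_complex R)) (inj_eq (@complexI R)).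
Qed.

End ComplexModulus.

Section EigenvalueBound.
Variables (R : rcfType) (m n : nat) (A : tensor R m n).
Hypothesis A_ge0 : forall i t, 0 <= A i t.

Lemma eigenpair_cmod_subeigen (lam : R[i]) (x : 'I_n -> R[i]) :
  (forall i, \sum_(s : (m.-1).-tuple 'I_n) (A i s)%:C%C * \prod_(j < m.-1) x (tnth s j)
             = lam * x i ^+ m.-1) ->
  subeigen A (cmod lam) (fun j => cmod (x j)).
Proof.
move=> eig i; rewrite -lecR.
have -> : (cmod lam * cmod (x i) ^+ m.-1)%:C%C = `|lam * x i ^+ m.-1|.
  by rewrite normrM normrX !normCE rmorphM rmorphXn.
rewrite -eig rmorph_sum; apply: le_trans (ler_norm_sum _ _ _) _; apply: ler_sum => s _.
rewrite normrM normr_prod normCE cmodR ger0_norm // rmorphM rmorph_prod.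
by under eq_bigr do rewrite normCE.
Qed.

Lemma teigenvalue_cmod_le_ratio (lam : R[i]) :
  (forall i, 0 < rsum A i) -> teigenvalue A lam ->
  exists i, cmod lam <= rsum (tsquare A) i / rsum A i ^+ m.-1.
Proof.
move=> r_gt0 [x [[j xj_neq0] eig]].
have xj_gt0 : 0 < cmod (x j) by rewrite lt_def cmod_eq0 xj_neq0 cmod_ge0.
have [i le_i] := subeigen_le_ratio A_ge0 r_gt0 (fun k => cmod_ge0 (x k))
  (ex_intro _ j xj_gt0) (eigenpair_cmod_subeigen eig).
by exists i; rewrite rsum_tsquare.
Qed.

Lemma teigenvalue_real (lam : R) (y : 'I_n -> R) : (exists j, y j != 0) ->
  (forall i, tapply A y i = lam * y i ^+ m.-1) -> teigenvalue A lam%:C%C.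
Proof.
move=> [j yj_neq0] eig; exists (fun k => (y k)%:C%C); split.
  by exists j; rewrite -(rmorph0 (real_complex R)) (inj_eq (@complexI R)).
move=> i; rewrite -rmorphXn -rmorphM -eig rmorph_sum.
by apply: eq_bigr => s _; rewrite rmorphM rmorph_prod.
Qed.

End EigenvalueBound.

Lemma exprD_sub_le (R : realDomainType) (a t : R) p : 0 <= a -> 0 <= t <= 1 ->
  (a + t) ^+ p - a ^+ p <= t * (p%:R * (a + 1) ^+ p.-1).
Proof.
move=> a_ge0 /andP[t_ge0 t_le1].
have -> : p%:R * (a + 1) ^+ p.-1 = \sum_(l < p) (a + 1) ^+ p.-1.
  by rewrite sumr_const card_ord mulr_natl.
rewrite subrXX (addrC a t) addrK ler_wpM2l //; apply: ler_sum => l _.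
have lp : (l <= p.-1)%N by rewrite -ltnS (ltn_predK (ltn_ord l)).
rewrite -[in leRHS](subnK lp) exprD ler_pM ?exprn_ge0 ?addr_ge0 //.
  by rewrite lerXn2r ?nnegrE ?addr_ge0 // addrC lerD2l.
by rewrite lerXn2r ?nnegrE ?addr_ge0 // lerDl.
Qed.

Section Simplex.
Variables (R : realFieldType) (n : nat).
Implicit Types y : 'I_n -> R.

Lemma simplex_le1 y i : simplex y -> y i <= 1.
Proof. by move=> [y_ge0 <-]; rewrite (bigD1 i) //= lerDl sumr_ge0. Qed.

Lemma simplex_exists_gt0 y : simplex y -> exists i, 0 < y i.
Proof.
move=> [y_ge0 y_sum]; apply/existsP; apply: contraT => /existsPn y_le0.
have : \sum_i y i <= 0 by rewrite sumr_le0 // => i _; rewrite leNgt y_le0.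
by rewrite y_sum ler10.
Qed.

Lemma simplex_normalize y i : (forall j, 0 <= y j) -> 0 < y i ->
  simplex (fun j => (\sum_k y k)^-1 * y j).
Proof.
move=> y_ge0 yi_gt0.
have sum_gt0 : 0 < \sum_k y k.
  by apply: lt_le_trans yi_gt0 _; rewrite (bigD1 i) //= lerDl sumr_ge0.
split=> [j|]; first by rewrite mulr_ge0 // invr_ge0 ltW.
by rewrite /= -mulr_sumr mulVf ?gt_eqF.
Qed.

End Simplex.

Section Subeigen.
Variables (R : realFieldType) (n p : nat).
Implicit Types (B : 'I_n -> p.-tuple 'I_n -> R) (y z : 'I_n -> R).

Lemma subeigen_normalize B nu y i : (forall j, 0 <= y j) -> 0 < y i ->
  subeigen B nu y -> exists2 w, simplex w & subeigen B nu w.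
Proof.
move=> y_ge0 yi_gt0 y_sub; exists (fun j => (\sum_k y k)^-1 * y j).
  exact: simplex_normalize yi_gt0.
move=> j; rewrite tapplyZ exprMn mulrCA ler_wpM2l // exprn_ge0 // invr_ge0.
by rewrite sumr_ge0.
Qed.

Lemma subeigen_strict_improve B nu y : (forall j, 0 <= y j) ->
  (forall i, nu * y i ^+ p < tapply B y i) -> exists2 d, 0 < d & subeigen B (nu + d) y.
Proof.
move=> y_ge0 y_strict.
pose gap i := (tapply B y i - nu * y i ^+ p) / (y i ^+ p + 1).
have ypow_ge0 i : 0 <= y i ^+ p by rewrite exprn_ge0.
exists (\big[Order.min/1]_i gap i).
  apply: lt_bigmin => // i _; rewrite divr_gt0 ?subr_gt0 //.
  by rewrite ltr_wpDl.
move=> i; rewrite mulrDl -lerBrDl.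
have d_le : \big[Order.min/1]_j gap j <= gap i := bigmin_le _ _ _.
apply: le_trans (ler_wpM2r (ypow_ge0 i) d_le) _.
rewrite /gap mulrAC ler_pdivrMr ?ltr_wpDl // ler_wpM2l ?lerDl //.
by rewrite subr_ge0 ltW.
Qed.

Hypothesis p_gt0 : (0 < p)%N.

Lemma lt_tapply B y z k i : (forall i s, 0 < B i s) ->
  (forall j, 0 <= y j <= z j) -> y k < z k -> tapply B y i < tapply B z i.
Proof.
move=> B_gt0 yz yzk.
have B_ge0 i' s : 0 <= B i' s by exact: ltW.
pose diag := [tuple k | _ < p].
have diag_prod w : \prod_(j < p) w (tnth diag j) = w k ^+ p.
  by under eq_bigr do rewrite tnth_mktuple; rewrite prodr_const card_ord.
rewrite /tapply (bigD1 diag) // [ltRHS](bigD1 diag) //= !diag_prod.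
apply: ltr_leD; first by rewrite ltr_pM2l // ltrXn2r -?lt0n //; have /andP[] := yz k.
by apply: ler_sum => s _; rewrite ler_wpM2l // ler_prod.
Qed.

Lemma subeigen_perturb B nu y k : (forall i s, 0 < B i s) -> (forall j, 0 <= y j) ->
  subeigen B nu y -> nu * y k ^+ p < tapply B y k ->
  exists z, [/\ forall j, 0 <= z j, 0 < z k & forall i, nu * z i ^+ p < tapply B z i].
Proof.
move=> B_gt0 y_ge0 y_sub yk_strict.
set gap := tapply B y k - nu * y k ^+ p.
have gap_gt0 : 0 < gap by rewrite subr_gt0.
set D := p%:R * (y k + 1) ^+ p.-1.
have nuD_gt0 : 0 < `|nu| * D + 1 by rewrite ltr_wpDl ?mulr_ge0 ?exprn_ge0 ?addr_ge0.
(* D bounds the growth of x ^+ p on [y k, y k + 1] (exprD_sub_le). *)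
set t := Order.min 1 (gap / (`|nu| * D + 1)).
have t_gt0 : 0 < t by rewrite lt_min ltr01 divr_gt0.
have t_le1 : t <= 1 by rewrite ge_min lexx.
have t_gap : t * (`|nu| * D + 1) <= gap by rewrite -ler_pdivlMr // ge_min lexx orbT.
pose z j := y j + (j == k)%:R * t.
have y_le_z j : y j <= z j by rewrite lerDl mulr_ge0 ?ler0n ?ltW.
have yz j : 0 <= y j <= z j by rewrite y_ge0 y_le_z.
have zk : z k = y k + t by rewrite /z eqxx mul1r.
have yzk : y k < z k by rewrite zk ltrDl.
exists z; split=> [j | | i]; first exact: le_trans (y_ge0 j) (y_le_z j).
  by rewrite zk ltr_wpDl.
have [->|ik] := eqVneq i k; last first.
  rewrite /z (negbTE ik) mul0r addr0.
  exact: le_lt_trans (y_sub i) (lt_tapply _ B_gt0 yz yzk).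
apply: lt_trans (lt_tapply _ B_gt0 yz yzk).
have zk_pow : 0 <= z k ^+ p - y k ^+ p.
  by rewrite subr_ge0 lerXn2r ?nnegrE ?y_ge0 // (le_trans (y_ge0 k)).
have pow_gap : z k ^+ p - y k ^+ p <= t * D.
  by rewrite zk exprD_sub_le ?y_ge0 // (ltW t_gt0) t_le1.
have nu_gap : nu * (z k ^+ p - y k ^+ p) <= `|nu| * (t * D).
  by apply: le_trans (ler_wpM2r zk_pow (ler_norm nu)) _; rewrite ler_wpM2l.
have tD : `|nu| * (t * D) = t * (`|nu| * D + 1) - t by ring.
rewrite tD mulrBr in nu_gap; rewrite /gap in t_gap; lra.
Qed.

End Subeigen.

Section Compactness.
Local Open Scope classical_set_scope.
Variables (R : realType) (n : nat).
Local Notation V := 'rV[R]_n.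

Lemma continuous_coordX i q : continuous (fun v : V => v ord0 i ^+ q).
Proof.
move=> v.
exact: continuous_comp (@coord_continuous R 1 n ord0 i v) (@exprn_continuous R q _).
Qed.

Lemma continuous_tapply p (B : 'I_n -> p.-tuple 'I_n -> R) i :
  continuous (fun v : V => tapply B (v ord0) i).
Proof.
apply: continuous_big; first exact: add_continuous.
move=> s _ v; apply: continuousM; first exact: cst_continuous.
apply: continuous_big v; first exact: mul_continuous.
by move=> j _; exact: coord_continuous.
Qed.

Lemma closed_simplex : closed [set v : V | simplex (v ord0)].
Proof.
have -> : [set v : V | simplex (v ord0)] =
          [set v : V | forall i, 0 <= v ord0 i] `&` [set v | \sum_i v ord0 i = 1] by [].
apply: closedI.
  have -> : [set v : V | forall i, 0 <= v ord0 i] =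
            \bigcap_(i in setT) ((fun v : V => v ord0 i) @^-1` [set x | 0 <= x]).
    by apply/seteqP; split=> v /= v_ge0 i *; apply: v_ge0.
  apply: closed_bigI => i _; apply: preimage_closed; last exact: closed_ge.
  by move=> v _; exact: coord_continuous.
apply: (@preimage_closed _ _ (fun v : V => \sum_i v ord0 i) [set x | x = 1]).
  move=> v _; apply: continuous_big v => [|j _]; first exact: add_continuous.
  exact: coord_continuous.
exact: closed_eq.
Qed.

Lemma simplex_approx (Q : Type) (f : Q -> ('I_n -> R) -> R) :
  (forall q, continuous (fun v : V => f q (v ord0))) ->
  (forall e, 0 < e -> exists2 y, simplex y & forall q, f q y <= e) ->
  exists2 y, simplex y & forall q, f q y <= 0.
Proof.
move=> f_cont approx.
pose D e := [set v : V | simplex (v ord0)] `&`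
  \bigcap_(q in setT) ((fun v : V => f q (v ord0)) @^-1` [set x | x <= e]).
have D_closed e : closed (D e).
  apply: closedI; first exact: closed_simplex.
  apply: closed_bigI => q _; apply: preimage_closed; last exact: closed_le.
  by move=> v _; exact: f_cont.
pose F := filter_from [set e : R | 0 < e] D.
have F_proper : ProperFilter F.
  apply: filter_from_proper => [|e /approx [y y_simplex y_le]]; last first.
    have row_y : (\row_j y j : V) ord0 = y by apply/funext => j; rewrite mxE.
    by exists (\row_j y j); split=> [|q _]; rewrite /= row_y.
  apply: filter_from_filter; first by exists 1; rewrite /= ltr01.
  move=> e1 e2 e1_gt0 e2_gt0; exists (Order.min e1 e2); first by rewrite /= lt_min e1_gt0.
  move=> v [v_simplex v_le]; split; split=> // q _ /=; apply: le_trans (v_le q I) _.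
    by rewrite ge_min lexx.
  by rewrite ge_min lexx orbT.
pose K := [set v : V | forall i, `[0, 1] (v ord0 i)].
have FK : F K.
  exists 1; rewrite /= ?ltr01 // => v [v_simplex _] i.
  by rewrite /= in_itv /= (v_simplex.1 i) simplex_le1.
have [v [_ v_cluster]] := rV_compact (fun _ => @segment_compact R 0 1) F_proper FK.
have D_v e : 0 < e -> D e v.
  move=> e_gt0; rewrite (closure_id (D e)).1 //.
  by move: v_cluster; rewrite clusterE; apply; exists e.
have [v_simplex _] := D_v 1 ltr01.
exists (v ord0) => // q; apply/ler_addgt0Pr => e /D_v [_ v_le].
by rewrite add0r; exact: v_le.
Qed.

End Compactness.

Section NonnegativeEigenpair.
Local Open Scope classical_set_scope.
Variables (R : realType) (n p : nat).
Hypothesis p_gt0 : (0 < p)%N.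
Implicit Types A B : 'I_n -> p.-tuple 'I_n -> R.

Lemma positive_eigenpair_ge B c z : (forall i s, 0 < B i s) ->
  simplex z -> subeigen B c z ->
  exists y lam, [/\ simplex y, c <= lam & forall i, tapply B y i = lam * y i ^+ p].
Proof.
move=> B_gt0 z_simplex z_sub.
have B_ge0 i s : 0 <= B i s by exact: ltW.
pose S := [set nu : R | exists2 y, simplex y & subeigen B nu y].
have S_ub : ubound S (\sum_i tapply B (fun=> 1) i).
  move=> nu [y [y_ge0 y_sum] y_sub].
  have [k nu_le] := subeigen_le_ratio B_ge0 (fun=> ltr01) y_ge0
    (simplex_exists_gt0 (conj y_ge0 y_sum)) y_sub.
  rewrite expr1n divr1 in nu_le; apply: le_trans nu_le _; rewrite (bigD1 k) //= lerDl.
  by rewrite sumr_ge0 // => j _; rewrite tapply_ge0.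
have S_sup : has_sup S by split; [exists c, z | exists (\sum_i tapply B (fun=> 1) i)].
set mu := sup S.
have [y y_simplex y_sub] : exists2 y, simplex y & subeigen B mu y.
  have [|e e_gt0|y y_simplex y_le] :=
    simplex_approx (f := fun i y => mu * y i ^+ p - tapply B y i).
  - move=> i v; exact: continuousB (continuousM (@cst_continuous _ _ mu v)
      (@continuous_coordX _ _ i p v)) (@continuous_tapply _ _ _ B i v).
  - have [nu [y y_simplex y_sub] nu_gt] := sup_adherent e_gt0 S_sup.
    exists y => // i; have := y_sub i.
    have ypow_ge0 : 0 <= y i ^+ p by rewrite exprn_ge0 // y_simplex.1.
    have ypow_le1 : y i ^+ p <= 1 by rewrite exprn_ile1 ?y_simplex.1 ?simplex_le1.
    have := ler_wpM2r ypow_ge0 (ltW nu_gt); have := ler_piMr (ltW e_gt0) ypow_le1.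
    rewrite -/mu mulrBl; lra.
  - by exists y => // i; rewrite -subr_le0.
exists y, mu; split=> //.
  exact: sup_upper_bound S_sup _ (ex_intro2 _ _ z z_simplex z_sub).
move=> i; apply/eqP; rewrite eq_le y_sub andbT leNgt; apply/negP => strict.
have [w [w_ge0 wi_gt0 w_strict]] := subeigen_perturb p_gt0 B_gt0 y_simplex.1 y_sub strict.
have [d d_gt0 w_sub] := subeigen_strict_improve w_ge0 w_strict.
have [u u_simplex u_sub] := subeigen_normalize w_ge0 wi_gt0 w_sub.
have := sup_upper_bound S_sup (ex_intro2 _ _ u u_simplex u_sub).
by rewrite -/mu gerDl leNgt d_gt0.
Qed.

Lemma nonneg_eigenpair_ge A c z : (forall i s, 0 <= A i s) ->
  simplex z -> subeigen A c z ->
  exists y lam, [/\ simplex y, c <= lam & forall i, tapply A y i = lam * y i ^+ p].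
Proof.
move=> A_ge0 z_simplex z_sub.
(* The constraints [inl (i, l)] say that y is an eigenvector without naming its
   eigenvalue, which need not converge along the approximations. *)
pose f (q : 'I_n * 'I_n + 'I_n) y := match q with
  | inl (i, l) => tapply A y i * y l ^+ p - tapply A y l * y i ^+ p
  | inr i => c * y i ^+ p - tapply A y i end.
have [[[i l]|i] v|e e_gt0|y y_simplex y_le] := simplex_approx (f := f).
- exact: continuousB
    (continuousM (@continuous_tapply _ _ _ A i v) (@continuous_coordX _ _ l p v))
    (continuousM (@continuous_tapply _ _ _ A l v) (@continuous_coordX _ _ i p v)).
- exact: continuousB (continuousM (@cst_continuous _ _ c v) (@continuous_coordX _ _ i p v))
    (@continuous_tapply _ _ _ A i v).
- pose B i s := A i s + e.
  have B_gt0 i s : 0 < B i s by rewrite ltr_wpDl.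
  have Bz_sub : subeigen B c z.
    move=> i; rewrite tapplyDc; apply: le_trans (z_sub i) _.
    by rewrite z_simplex.2 expr1n mulr1 lerDl ltW.
  have [y [lam [y_simplex c_le eig]]] := positive_eigenpair_ge B_gt0 z_simplex Bz_sub.
  have Ay i : tapply A y i = lam * y i ^+ p - e.
    by rewrite -eig tapplyDc y_simplex.2 expr1n mulr1 addrK.
  have ypow_ge0 i : 0 <= y i ^+ p by rewrite exprn_ge0 // y_simplex.1.
  have ypow_le1 i : y i ^+ p <= 1 by rewrite exprn_ile1 ?y_simplex.1 ?simplex_le1.
  exists y => // -[[i l]|i]; rewrite /f !Ay.
    have -> : (lam * y i ^+ p - e) * y l ^+ p - (lam * y l ^+ p - e) * y i ^+ p
              = e * y i ^+ p - e * y l ^+ p by ring.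
    rewrite lerBlDr (le_trans (ler_piMr (ltW e_gt0) (ypow_le1 i))) //.
    by rewrite lerDl (mulr_ge0 (ltW e_gt0) (ypow_ge0 l)).
  by rewrite opprB addrCA gerDl subr_le0 ler_wpM2r.
have cross i l : tapply A y i * y l ^+ p <= tapply A y l * y i ^+ p.
  by rewrite -subr_le0; exact: y_le (inl (i, l)).
have [l yl_gt0] := simplex_exists_gt0 y_simplex.
have ylp_gt0 : 0 < y l ^+ p := exprn_gt0 p yl_gt0.
exists y, (tapply A y l / y l ^+ p); split=> //.
  by rewrite ler_pdivlMr // -subr_le0; exact: y_le (inr l).
move=> i; apply: (mulIf (lt0r_neq0 ylp_gt0)); rewrite mulrAC divfK ?lt0r_neq0 //.
by apply/eqP; rewrite eq_le !cross.
Qed.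

End NonnegativeEigenpair.

Section SpectralRadius.
Variables (R : realType) (m n : nat) (A : tensor R m n) (b : R).
Hypothesis eig_bounded : forall lam, teigenvalue A lam -> cmod lam <= b.

Lemma cmod_le_spectral_radius lam : teigenvalue A lam -> cmod lam <= spectral_radius A.
Proof.
move=> lam_eig; apply: sup_upper_bound; last by exists lam.
by split; [exists (cmod lam), lam | exists b => _ [mu mu_eig <-]; exact: eig_bounded].
Qed.

Lemma spectral_radius_le lam : teigenvalue A lam -> spectral_radius A <= b.
Proof.
move=> lam_eig; apply: ge_sup; first by exists (cmod lam), lam.
by move=> _ [mu mu_eig <-]; exact: eig_bounded.
Qed.

End SpectralRadius.

Theorem theorem3p2 (R : realType) (m n : nat) (A : tensor R m n)
  (hm : (2 <= m)%N) (hn : (1 <= n)%N)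
  (hA : forall (i : 'I_n) (t : (m.-1).-tuple 'I_n), 0 <= A i t)
  (hr : forall i : 'I_n, rsum A i != 0) :
  fmin hn (fun i => rsum (tsquare A) i / rsum A i ^+ (m.-1)) <= spectral_radius A
  /\ spectral_radius A <= fmax hn (fun i => rsum (tsquare A) i / rsum A i ^+ (m.-1)).
Proof.
have p_gt0 : (0 < m.-1)%N by rewrite ltn_predRL.
have r_gt0 i : 0 < rsum A i by rewrite lt_def hr sumr_ge0.
set f := fun i => _.
have eig_le_max lam : teigenvalue A lam -> cmod lam <= fmax hn f.
  move=> /(teigenvalue_cmod_le_ratio hA r_gt0) [i le_fi].
  exact: le_trans le_fi (le_bigmax _ _ _).
have r_sub : subeigen A (fmin hn f) (rsum A).
  by move=> i; rewrite -rsum_tsquare // -ler_pdivlMr ?exprn_gt0 //; exact: bigmin_le.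
have [z z_simplex z_sub] :=
  subeigen_normalize (fun i => ltW (r_gt0 i)) (r_gt0 (Ordinal hn)) r_sub.
have [y [lam [y_simplex min_le eig]]] := nonneg_eigenpair_ge p_gt0 hA z_simplex z_sub.
have lam_eig : teigenvalue A lam%:C%C.
  have [j yj_gt0] := simplex_exists_gt0 y_simplex.
  by apply: teigenvalue_real eig; exists j; rewrite gt_eqF.
split; last exact (spectral_radius_le eig_le_max lam_eig).
apply: le_trans (cmod_le_spectral_radius eig_le_max lam_eig); rewrite cmodR.
exact: le_trans min_le (ler_norm lam).
Qed.
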